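(* The space $R^\natural(S^1\times D^2,A_1)$ is homeomorphic to $S^3=\{(z_1,z_2)\in\mathbb{C}^2:|z_1|^2+|z_2|^2=1\}$, via the map sending $(z_1,z_2)$ to the class of $$a=i\sigma_z,\ b=a^{-1},\ A=\begin{pmatrix} z_1&-\bar z_2\\ z_2&\bar z_1\end{pmatrix},\ B=1,\ h=i\sigma_x,\ w=-1.$$ All classes in $R^\natural(S^1\times D^2,A_1)$ are nonabelian.
   Context: Pauli matrices standard. $R^\natural(S^1\times D^2,A_1)$ is the traceless character variety of the solid torus minus an unknotted arc $A_1$, a small meridional loop $H$ around $A_1$, and an arc $W$ joining $A_1$ to $H$, whose fundamental group is $\langle A,B,a,b,h,w\mid hwa=ah,\ b=a^{-1},\ B=1\rangle$. Concretely, it is the space of tuples $(A,B,a,b,h,w)\in SU(2)^6$ with $\operatorname{tr}a=\operatorname{tr}h=0$, $w=-1$, $hwa=ah$, $b=a^{-1}$, $B=1$, modulo simultaneous conjugation, with quotient topology. A class is nonabelian if the matrices of a representative do not all pairwise commute. *)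

From Stdlib Require Import Reals.
Open Scope R_scope.

Definition C := (R * R)%type.
Definition C0 : C := (0, 0).
Definition C1 : C := (1, 0).
Definition Ci : C := (0, 1).
Definition Cadd (z w : C) : C := (fst z + fst w, snd z + snd w).
Definition Copp (z : C) : C := (- fst z, - snd z).
Definition Cmul (z w : C) : C :=
  (fst z * fst w - snd z * snd w, fst z * snd w + snd z * fst w).
Definition Cconj (z : C) : C := (fst z, - snd z).
Definition Cnorm2 (z : C) : R := fst z * fst z + snd z * snd z.
Definition Cdist (z w : C) : R := Rabs (fst z - fst w) + Rabs (snd z - snd w).

Record M2 := mkM2 { m11 : C; m12 : C; m21 : C; m22 : C }.
Definition Mmul (X Y : M2) : M2 :=
  mkM2 (Cadd (Cmul (m11 X) (m11 Y)) (Cmul (m12 X) (m21 Y)))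
       (Cadd (Cmul (m11 X) (m12 Y)) (Cmul (m12 X) (m22 Y)))
       (Cadd (Cmul (m21 X) (m11 Y)) (Cmul (m22 X) (m21 Y)))
       (Cadd (Cmul (m21 X) (m12 Y)) (Cmul (m22 X) (m22 Y))).
Definition Madj (X : M2) : M2 :=
  mkM2 (Cconj (m11 X)) (Cconj (m21 X)) (Cconj (m12 X)) (Cconj (m22 X)).
Definition Mid : M2 := mkM2 C1 C0 C0 C1.
Definition Mneg (X : M2) : M2 :=
  mkM2 (Copp (m11 X)) (Copp (m12 X)) (Copp (m21 X)) (Copp (m22 X)).
Definition Mdet (X : M2) : C :=
  Cadd (Cmul (m11 X) (m22 X)) (Copp (Cmul (m12 X) (m21 X))).
Definition Mtr (X : M2) : C := Cadd (m11 X) (m22 X).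
Definition Mdist (X Y : M2) : R :=
  Cdist (m11 X) (m11 Y) + Cdist (m12 X) (m12 Y)
  + Cdist (m21 X) (m21 Y) + Cdist (m22 X) (m22 Y).

Definition SU2 (X : M2) : Prop := Mmul X (Madj X) = Mid /\ Mdet X = C1.

Definition iSigmaZ : M2 := mkM2 Ci C0 C0 (Copp Ci).
Definition iSigmaX : M2 := mkM2 C0 Ci Ci C0.

Record T6 := mkT6 { tA : M2; tB : M2; ta : M2; tb : M2; th : M2; tw : M2 }.

Definition T6dist (p q : T6) : R :=
  Mdist (tA p) (tA q) + Mdist (tB p) (tB q) + Mdist (ta p) (ta q)
  + Mdist (tb p) (tb q) + Mdist (th p) (th q) + Mdist (tw p) (tw q).

Definition Rep (p : T6) : Prop :=
  SU2 (tA p) /\ SU2 (tB p) /\ SU2 (ta p) /\ SU2 (tb p) /\ SU2 (th p) /\ SU2 (tw p)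
  /\ Mtr (ta p) = C0 /\ Mtr (th p) = C0
  /\ tw p = Mneg Mid
  /\ Mmul (Mmul (th p) (tw p)) (ta p) = Mmul (ta p) (th p)
  /\ Mmul (ta p) (tb p) = Mid
  /\ tB p = Mid.

Definition conjM (g X : M2) : M2 := Mmul (Mmul g X) (Madj g).
Definition conjT (g : M2) (p : T6) : T6 :=
  mkT6 (conjM g (tA p)) (conjM g (tB p)) (conjM g (ta p))
       (conjM g (tb p)) (conjM g (th p)) (conjM g (tw p)).
Definition conjEquiv (p q : T6) : Prop := exists g, SU2 g /\ q = conjT g p.

Definition cls (p : T6) : T6 -> Prop := fun q => conjEquiv p q.

(** The traceless character variety R^natural(S^1 x D^2, A_1): the set of
    conjugacy classes of points of Rep. *)
Definition RChar : Type := { P : T6 -> Prop | exists p, Rep p /\ P = cls p }.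

(** Subspace topology on Rep (from the Euclidean topology of M2^6 = R^48;
    the L1 metric T6dist induces it). *)
Definition openRep (V : T6 -> Prop) : Prop :=
  forall p, Rep p -> V p ->
    exists eps, 0 < eps /\
      forall q, Rep q -> T6dist p q < eps -> V q.

Definition openRChar (S : RChar -> Prop) : Prop :=
  openRep (fun p => Rep p /\ exists c : RChar, S c /\ proj1_sig c p).

Definition S3 : Type := { z : C * C | Cnorm2 (fst z) + Cnorm2 (snd z) = 1 }.
Definition S3dist (z w : S3) : R :=
  Cdist (fst (proj1_sig z)) (fst (proj1_sig w))
  + Cdist (snd (proj1_sig z)) (snd (proj1_sig w)).
Definition openS3 (U : S3 -> Prop) : Prop :=
  forall z, U z -> exists eps, 0 < eps /\
    forall w, S3dist z w < eps -> U w.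

Definition homeomorphism (f : S3 -> RChar) : Prop :=
  exists g : RChar -> S3,
    (forall z, g (f z) = z) /\ (forall c, f (g c) = c)
    /\ (forall S, openRChar S -> openS3 (fun z => S (f z)))
    /\ (forall U, openS3 U -> openRChar (fun c => U (g c))).

Definition tupleOf (z1 z2 : C) : T6 :=
  mkT6 (mkM2 z1 (Copp (Cconj z2)) z2 (Cconj z1))
       Mid
       iSigmaZ
       (Madj iSigmaZ)  (* = a^{-1}, since a is in SU(2) *)
       iSigmaX
       (Mneg Mid).

Definition abelianT (p : T6) : Prop :=
  let l := (tA p :: tB p :: ta p :: tb p :: th p :: tw p :: nil)%list in
  forall X Y, List.In X l -> List.In Y l -> Mmul X Y = Mmul Y X.

(* A point of the representation space has [a^2 = h^2 = -1] and [h a = - a h], so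
   [(1, a, h, a h)] is, like [(1, i sigma_z, i sigma_x, i sigma_z i sigma_x)], an orthonormal
   frame of the quaternions, and averaging over the two frames yields [g] in SU(2) conjugating
   one into the other.  Hence every class contains a unique tuple [tupleOf z1 z2], where
   [(z1, z2)] are the coordinates of [A] in the frame [(1, a, a h, h)]; these coordinates are
   conjugation invariant and Lipschitz in the entries, which gives the homeomorphism.
   Nonabelianness is immediate from [h a = - a h]. *)

From Stdlib Require Import Reals Lra Psatz.
From Stdlib Require Import Classical ClassicalEpsilon FunctionalExtensionality
  PropExtensionality ProofIrrelevance.
Open Scope R_scope.

(** * Quaternion matrices and SU(2) *)

Definition quat (z1 z2 : C) : M2 := mkM2 z1 (Copp (Cconj z2)) z2 (Cconj z1).
Definition M0 : M2 := mkM2 C0 C0 C0 C0.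
Definition Madd (X Y : M2) : M2 :=
  mkM2 (Cadd (m11 X) (m11 Y)) (Cadd (m12 X) (m12 Y))
       (Cadd (m21 X) (m21 Y)) (Cadd (m22 X) (m22 Y)).
Definition Cscale (k : R) (z : C) : C := (k * fst z, k * snd z).
Definition Mscale (k : R) (X : M2) : M2 :=
  mkM2 (Cscale k (m11 X)) (Cscale k (m12 X)) (Cscale k (m21 X)) (Cscale k (m22 X)).

Lemma M2_ext (X Y : M2) :
  fst (m11 X) = fst (m11 Y) -> snd (m11 X) = snd (m11 Y) ->
  fst (m12 X) = fst (m12 Y) -> snd (m12 X) = snd (m12 Y) ->
  fst (m21 X) = fst (m21 Y) -> snd (m21 X) = snd (m21 Y) ->
  fst (m22 X) = fst (m22 Y) -> snd (m22 X) = snd (m22 Y) -> X = Y.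
Proof.
  destruct X as [[? ?] [? ?] [? ?] [? ?]], Y as [[? ?] [? ?] [? ?] [? ?]].
  simpl; intros; subst; reflexivity.
Qed.

Ltac destruct_entries :=
  repeat match goal with X : M2 |- _ => destruct X end;
  repeat match goal with z : C |- _ => destruct z end.

Ltac unfold_entries :=
  cbv [quat M0 Madd Mscale Cscale Mmul Madj Mneg Mid Mdet Mtr iSigmaZ iSigmaX
       Cadd Cmul Copp Cconj C0 C1 Ci m11 m12 m21 m22 fst snd] in *.

Ltac mat_ring := destruct_entries; apply M2_ext; unfold_entries; ring.

Lemma Mmul_assoc X Y Z : Mmul (Mmul X Y) Z = Mmul X (Mmul Y Z). Proof. mat_ring. Qed.
Lemma Mmul_1l X : Mmul Mid X = X. Proof. mat_ring. Qed.
Lemma Mmul_1r X : Mmul X Mid = X. Proof. mat_ring. Qed.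
Lemma Mmul_0l X : Mmul M0 X = M0. Proof. mat_ring. Qed.
Lemma Mmul_negl X Y : Mmul (Mneg X) Y = Mneg (Mmul X Y). Proof. mat_ring. Qed.
Lemma Mmul_negr X Y : Mmul X (Mneg Y) = Mneg (Mmul X Y). Proof. mat_ring. Qed.
Lemma Mmul_scalel k X Y : Mmul (Mscale k X) Y = Mscale k (Mmul X Y). Proof. mat_ring. Qed.
Lemma Mmul_scaler k X Y : Mmul X (Mscale k Y) = Mscale k (Mmul X Y). Proof. mat_ring. Qed.
Lemma Mscale_scale k l X : Mscale k (Mscale l X) = Mscale (k * l) X. Proof. mat_ring. Qed.
Lemma Mscale_1 X : Mscale 1 X = X. Proof. mat_ring. Qed.
Lemma Madd_0r X : Madd X M0 = X. Proof. mat_ring. Qed.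
Lemma Madd_Nl X : Madd (Mneg X) X = M0. Proof. mat_ring. Qed.
Lemma Madd_Nr X : Madd X (Mneg X) = M0. Proof. mat_ring. Qed.
Lemma Mneg_neg X : Mneg (Mneg X) = X. Proof. mat_ring. Qed.
Lemma Madj_mul X Y : Madj (Mmul X Y) = Mmul (Madj Y) (Madj X). Proof. mat_ring. Qed.
Lemma Madj_adj X : Madj (Madj X) = X. Proof. mat_ring. Qed.
Lemma Madj_id : Madj Mid = Mid. Proof. mat_ring. Qed.
Lemma Madj_scale k X : Madj (Mscale k X) = Mscale k (Madj X). Proof. mat_ring. Qed.
Lemma Mtr_mulC X Y : Mtr (Mmul X Y) = Mtr (Mmul Y X).
Proof. destruct_entries; unfold_entries; f_equal; ring. Qed.
Lemma Mdet_mul X Y : Mdet (Mmul X Y) = Cmul (Mdet X) (Mdet Y).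
Proof. destruct_entries; unfold_entries; f_equal; ring. Qed.
Lemma Mdet_adj X : Mdet (Madj X) = Cconj (Mdet X).
Proof. destruct_entries; unfold_entries; f_equal; ring. Qed.

Definition is_quat (X : M2) : Prop := exists z1 z2, X = quat z1 z2.
Definition qnorm (X : M2) : R := Cnorm2 (m11 X) + Cnorm2 (m21 X).

Ltac is_quat_closure :=
  intros; repeat match goal with H : is_quat _ |- _ => destruct H as [? [? ->]] end;
  match goal with |- is_quat ?Y => exists (m11 Y), (m21 Y) end; mat_ring.

Lemma is_quat_add X Y : is_quat X -> is_quat Y -> is_quat (Madd X Y). Proof. is_quat_closure. Qed.
Lemma is_quat_mul X Y : is_quat X -> is_quat Y -> is_quat (Mmul X Y). Proof. is_quat_closure. Qed.
Lemma is_quat_adj X : is_quat X -> is_quat (Madj X). Proof. is_quat_closure. Qed.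
Lemma is_quat_id : is_quat Mid. Proof. is_quat_closure. Qed.
Lemma is_quat_iSigmaZ : is_quat iSigmaZ. Proof. is_quat_closure. Qed.
Lemma is_quat_iSigmaX : is_quat iSigmaX. Proof. is_quat_closure. Qed.

Lemma quat_mul_adj X : is_quat X -> Mmul X (Madj X) = Mscale (qnorm X) Mid.
Proof. intros [z1 [z2 ->]]; unfold qnorm, Cnorm2; mat_ring. Qed.

Lemma quat_adj_mul X : is_quat X -> Mmul (Madj X) X = Mscale (qnorm X) Mid.
Proof. intros [z1 [z2 ->]]; unfold qnorm, Cnorm2; mat_ring. Qed.

Lemma qnorm_eq0 X : is_quat X -> qnorm X <= 0 -> X = M0.
Proof.
  intros [[x1 y1] [[x2 y2] ->]]; unfold qnorm, Cnorm2; unfold_entries; intros H.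
  apply M2_ext; unfold_entries; nra.
Qed.

Lemma qnorm_scale k X : qnorm (Mscale k X) = k * k * qnorm X.
Proof. destruct_entries; unfold qnorm, Cnorm2; unfold_entries; ring. Qed.

Lemma is_quat_scale k X : is_quat X -> is_quat (Mscale k X). Proof. is_quat_closure. Qed.

Definition Madjugate (X : M2) : M2 := mkM2 (m22 X) (Copp (m12 X)) (Copp (m21 X)) (m11 X).

Lemma Madjugate_mul X : Mmul (Madjugate X) X = mkM2 (Mdet X) C0 C0 (Mdet X).
Proof. unfold Madjugate, Mdet; mat_ring. Qed.

(* For a unitary X of determinant 1 the adjugate is X^-1 = X^*; comparing entries
   gives the quaternion shape. *)
Lemma SU2_quat X : SU2 X -> is_quat X /\ qnorm X = 1.
Proof.
  intros [Hunit Hdet].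
  assert (Hadj : Madjugate X = Madj X).
  { rewrite <- (Mmul_1r (Madjugate X)), <- Hunit, <- Mmul_assoc, Madjugate_mul, Hdet.
    apply Mmul_1l. }
  assert (H11 := f_equal (fun M => fst (m11 M)) Hunit).
  destruct X as [[a1 a2] [b1 b2] [c1 c2] [d1 d2]].
  unfold Madjugate in Hadj; unfold_entries; injection Hadj; intros.
  split.
  - exists (a1, a2), (c1, c2); apply M2_ext; unfold_entries; lra.
  - unfold qnorm, Cnorm2; cbn; nra.
Qed.

Lemma quat_SU2 X : is_quat X -> qnorm X = 1 -> SU2 X.
Proof.
  intros HX Hn; split.
  - rewrite quat_mul_adj, Hn by exact HX; apply Mscale_1.
  - destruct HX as [[x1 y1] [[x2 y2] ->]]; unfold qnorm, Cnorm2 in Hn; unfold_entries.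
    f_equal; nra.
Qed.

Lemma SU2_adj_l X : SU2 X -> Mmul (Madj X) X = Mid.
Proof.
  intros HX; destruct (SU2_quat X HX) as [Hq Hn].
  rewrite quat_adj_mul, Hn by exact Hq; apply Mscale_1.
Qed.

Lemma SU2_mul X Y : SU2 X -> SU2 Y -> SU2 (Mmul X Y).
Proof.
  intros [HX HdX] [HY HdY]; split.
  - rewrite Madj_mul, Mmul_assoc, <- (Mmul_assoc Y), HY, Mmul_1l; exact HX.
  - rewrite Mdet_mul, HdX, HdY; unfold_entries; f_equal; ring.
Qed.

Lemma SU2_adj X : SU2 X -> SU2 (Madj X).
Proof.
  intros HX; split.
  - rewrite Madj_adj; apply SU2_adj_l, HX.
  - destruct HX as [_ Hd]; rewrite Mdet_adj, Hd; unfold_entries; f_equal; ring.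
Qed.

Lemma SU2_inv_unique X Y : SU2 X -> Mmul X Y = Mid -> Y = Madj X.
Proof.
  intros HX HXY.
  rewrite <- (Mmul_1l Y), <- (SU2_adj_l X HX), Mmul_assoc, HXY; apply Mmul_1r.
Qed.

Lemma SU2_id : SU2 Mid. Proof. split; [mat_ring | unfold_entries; f_equal; ring]. Qed.
Lemma SU2_neg_id : SU2 (Mneg Mid). Proof. split; [mat_ring | unfold_entries; f_equal; ring]. Qed.
Lemma SU2_iSigmaZ : SU2 iSigmaZ. Proof. split; [mat_ring | unfold_entries; f_equal; ring]. Qed.
Lemma SU2_iSigmaX : SU2 iSigmaX. Proof. split; [mat_ring | unfold_entries; f_equal; ring]. Qed.

Lemma SU2_traceless_sq X : SU2 X -> Mtr X = C0 -> Mmul X X = Mneg Mid.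
Proof.
  intros HX Htr; destruct (SU2_quat X HX) as [[[x1 y1] [[x2 y2] ->]] Hn].
  unfold qnorm, Cnorm2 in Hn; unfold_entries; injection Htr; intros.
  apply M2_ext; unfold_entries; nra.
Qed.

Lemma SU2_neq_neg X : SU2 X -> X <> Mneg X.
Proof.
  intros [_ Hd] E; rewrite E in Hd.
  destruct X as [[a1 a2] [b1 b2] [c1 c2] [d1 d2]]; unfold_entries.
  injection E; injection Hd; intros; nra.
Qed.

Lemma SU2_entry_bound X : SU2 X ->
  Rabs (fst (m11 X)) <= 1 /\ Rabs (snd (m11 X)) <= 1 /\
  Rabs (fst (m12 X)) <= 1 /\ Rabs (snd (m12 X)) <= 1 /\
  Rabs (fst (m21 X)) <= 1 /\ Rabs (snd (m21 X)) <= 1 /\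
  Rabs (fst (m22 X)) <= 1 /\ Rabs (snd (m22 X)) <= 1.
Proof.
  intros [HX _].
  assert (H11 := f_equal (fun M => fst (m11 M)) HX).
  assert (H22 := f_equal (fun M => fst (m22 M)) HX).
  destruct X as [[a1 a2] [b1 b2] [c1 c2] [d1 d2]]; unfold_entries.
  repeat split; apply Rabs_le; split; nra.
Qed.

Section Conjugation.
Variable g : M2.
Hypothesis Hg : SU2 g.

Lemma conjM_mul X Y : Mmul (conjM g X) (conjM g Y) = conjM g (Mmul X Y).
Proof.
  unfold conjM.
  rewrite !Mmul_assoc, <- (Mmul_assoc (Madj g) g), SU2_adj_l, Mmul_1l by exact Hg.
  reflexivity.
Qed.

Lemma conjM_tr X : Mtr (conjM g X) = Mtr X.
Proof.
  unfold conjM; rewrite Mtr_mulC, <- Mmul_assoc, SU2_adj_l, Mmul_1l by exact Hg.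
  reflexivity.
Qed.

Lemma conjM_K X : conjM (Madj g) (conjM g X) = X.
Proof.
  unfold conjM; rewrite Madj_adj, !Mmul_assoc, SU2_adj_l, Mmul_1r by exact Hg.
  rewrite <- !Mmul_assoc, SU2_adj_l, Mmul_1l by exact Hg; reflexivity.
Qed.

Lemma conjM_Kr X : conjM g (conjM (Madj g) X) = X.
Proof.
  unfold conjM; rewrite Madj_adj, !Mmul_assoc, (proj1 Hg), Mmul_1r.
  rewrite <- !Mmul_assoc, (proj1 Hg); apply Mmul_1l.
Qed.

Lemma conjM_1 : conjM g Mid = Mid.
Proof. unfold conjM; rewrite Mmul_1r; apply Hg. Qed.

Lemma conjM_inj X Y : conjM g X = conjM g Y -> X = Y.
Proof. intros E; rewrite <- (conjM_K X), <- (conjM_K Y), E; reflexivity. Qed.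

End Conjugation.

Lemma conjM_adj g X : Madj (conjM g X) = conjM g (Madj X).
Proof. unfold conjM; rewrite !Madj_mul, Madj_adj, Mmul_assoc; reflexivity. Qed.

Lemma conjM_neg g X : conjM g (Mneg X) = Mneg (conjM g X).
Proof. unfold conjM; rewrite Mmul_negr, Mmul_negl; reflexivity. Qed.

Lemma conjM_id X : conjM Mid X = X.
Proof. unfold conjM; rewrite Madj_id, Mmul_1l, Mmul_1r; reflexivity. Qed.

Lemma conjM_comp g1 g2 X : conjM g2 (conjM g1 X) = conjM (Mmul g2 g1) X.
Proof. unfold conjM; rewrite Madj_mul, !Mmul_assoc; reflexivity. Qed.

Lemma conjT_id p : conjT Mid p = p.
Proof. destruct p; unfold conjT; cbn; rewrite !conjM_id; reflexivity. Qed.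

Lemma conjT_comp g1 g2 p : conjT g2 (conjT g1 p) = conjT (Mmul g2 g1) p.
Proof. destruct p; unfold conjT; cbn; rewrite !conjM_comp; reflexivity. Qed.

Lemma conjEquiv_refl p : conjEquiv p p.
Proof. exists Mid; split; [apply SU2_id | symmetry; apply conjT_id]. Qed.

Lemma conjEquiv_sym p q : conjEquiv p q -> conjEquiv q p.
Proof.
  intros [g [Hg ->]]; exists (Madj g); split; [apply SU2_adj, Hg |].
  rewrite conjT_comp, SU2_adj_l by exact Hg; symmetry; apply conjT_id.
Qed.

Lemma conjEquiv_trans p q r : conjEquiv p q -> conjEquiv q r -> conjEquiv p r.
Proof.
  intros [g [Hg ->]] [g' [Hg' ->]]; exists (Mmul g' g).
  split; [apply SU2_mul; assumption | apply conjT_comp].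
Qed.

Lemma cls_eq p q : conjEquiv p q -> cls p = cls q.
Proof.
  intros Hpq; apply functional_extensionality; intros r; apply propositional_extensionality.
  unfold cls; split; intros H.
  - exact (conjEquiv_trans _ _ _ (conjEquiv_sym _ _ Hpq) H).
  - exact (conjEquiv_trans _ _ _ Hpq H).
Qed.

(** * Normal form *)

Lemma Rep_anticommute p : Rep p -> Mmul (th p) (ta p) = Mneg (Mmul (ta p) (th p)).
Proof.
  intros (_&_&_&_&_&_&_&_&Hw&Hrel&_).
  rewrite Hw, Mmul_negr, Mmul_1r, Mmul_negl in Hrel.
  rewrite <- Hrel, Mneg_neg; reflexivity.
Qed.

Definition e3 : M2 := Mmul iSigmaZ iSigmaX.

(* Sum of [u X v^*] over the pairs (u, v) = (1, 1), (a, i sigma_z), (h, i sigma_x), (c, e3).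
   When [a, h, c] satisfy the relations of [i sigma_z, i sigma_x, e3], it intertwines them. *)
Definition intertwiner (a h c X : M2) : M2 :=
  Madd (Madd (Madd X (Mmul (Mmul a X) (Madj iSigmaZ))) (Mmul (Mmul h X) (Madj iSigmaX)))
       (Mmul (Mmul c X) (Madj e3)).

Lemma intertwiner_iSigmaZ_defect a h c X :
  Mmul a (intertwiner a h c X) =
  Madd (Madd (Madd (Mmul (intertwiner a h c X) iSigmaZ)
    (Mmul (Mmul (Madd (Mmul a a) Mid) X) (Madj iSigmaZ)))
    (Mmul (Mmul (Madd (Mmul a h) (Mneg c)) X) (Madj iSigmaX)))
    (Mmul (Mmul (Madd (Mmul a c) h) X) (Madj e3)).
Proof. unfold intertwiner, e3; mat_ring. Qed.

Lemma intertwiner_iSigmaX_defect a h c X :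
  Mmul h (intertwiner a h c X) =
  Madd (Madd (Madd (Mmul (intertwiner a h c X) iSigmaX)
    (Mmul (Mmul (Madd (Mmul h h) Mid) X) (Madj iSigmaX)))
    (Mmul (Mmul (Madd (Mmul h a) c) X) (Madj iSigmaZ)))
    (Mmul (Mmul (Madd (Mmul h c) (Mneg a)) X) (Madj e3)).
Proof. unfold intertwiner, e3; mat_ring. Qed.

(* Only the [X] summand contributes: the others cancel when summed over the basis. *)
Lemma intertwiner_trace_sum a h c :
  fst (Mtr (Mmul (intertwiner a h c Mid) (Madj Mid)))
  + fst (Mtr (Mmul (intertwiner a h c iSigmaZ) (Madj iSigmaZ)))
  + fst (Mtr (Mmul (intertwiner a h c iSigmaX) (Madj iSigmaX)))
  + fst (Mtr (Mmul (intertwiner a h c e3) (Madj e3))) = 8.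
Proof. unfold intertwiner, e3; destruct_entries; unfold_entries; ring. Qed.

Lemma is_quat_e3 : is_quat e3.
Proof. apply is_quat_mul; [apply is_quat_iSigmaZ | apply is_quat_iSigmaX]. Qed.

Lemma is_quat_intertwiner a h c X :
  is_quat a -> is_quat h -> is_quat c -> is_quat X -> is_quat (intertwiner a h c X).
Proof.
  intros Ha Hh Hc HX; unfold intertwiner.
  repeat first [ apply is_quat_add | apply is_quat_mul | apply is_quat_adj | assumption
               | apply is_quat_iSigmaZ | apply is_quat_iSigmaX | apply is_quat_e3 ].
Qed.

Lemma intertwiner_nonzero a h c : is_quat a -> is_quat h -> is_quat c ->
  exists X, is_quat X /\ 0 < qnorm (intertwiner a h c X).
Proof.
  intros Ha Hh Hc; apply NNPP; intros Hnone.
  assert (Hzero : forall X, is_quat X -> intertwiner a h c X = M0).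
  { intros X HX; apply qnorm_eq0; [apply is_quat_intertwiner; assumption |].
    apply Rnot_lt_le; intros Hpos; apply Hnone; exists X; split; assumption. }
  assert (Htr0 : forall Y, fst (Mtr (Mmul M0 Y)) = 0).
  { intros Y; rewrite Mmul_0l; unfold_entries; ring. }
  pose proof (intertwiner_trace_sum a h c) as Hsum.
  rewrite (Hzero _ is_quat_id), (Hzero _ is_quat_iSigmaZ), (Hzero _ is_quat_iSigmaX),
    (Hzero _ is_quat_e3), !Htr0 in Hsum.
  lra.
Qed.

Section Normalization.
Variable N : M2.
Hypotheses (HN : is_quat N) (Hpos : 0 < qnorm N).

Let g := Mscale (/ sqrt (qnorm N)) N.

Lemma normalize_scale : / sqrt (qnorm N) * / sqrt (qnorm N) * qnorm N = 1.
Proof. rewrite <- Rinv_mult, sqrt_sqrt by lra; field; lra. Qed.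

Lemma SU2_normalize : SU2 g.
Proof.
  apply quat_SU2; [apply is_quat_scale, HN |].
  unfold g; rewrite qnorm_scale; apply normalize_scale.
Qed.

Lemma conjM_normalize Y Z : Mmul N Y = Mmul Z N -> conjM g Y = Z.
Proof.
  intros HYZ; unfold conjM, g.
  rewrite Madj_scale, !Mmul_scalel, !Mmul_scaler, Mscale_scale, HYZ, Mmul_assoc,
    quat_mul_adj, Mmul_scaler, Mmul_1r, Mscale_scale, normalize_scale by exact HN.
  apply Mscale_1.
Qed.

End Normalization.

Lemma conj_standard_frame a h :
  SU2 a -> SU2 h -> Mmul a a = Mneg Mid -> Mmul h h = Mneg Mid ->
  Mmul h a = Mneg (Mmul a h) ->
  exists g, SU2 g /\ conjM g iSigmaZ = a /\ conjM g iSigmaX = h.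
Proof.
  intros Ha Hh Haa Hhh Hha.
  assert (Qa : is_quat a) by apply (SU2_quat a Ha).
  assert (Qh : is_quat h) by apply (SU2_quat h Hh).
  assert (Qah : is_quat (Mmul a h)) by (apply is_quat_mul; assumption).
  destruct (intertwiner_nonzero a h (Mmul a h) Qa Qh Qah) as [X [QX Hpos]].
  assert (D1 : Madd (Mmul a a) Mid = M0) by (rewrite Haa; apply Madd_Nl).
  assert (D2 : Madd (Mmul a h) (Mneg (Mmul a h)) = M0) by apply Madd_Nr.
  assert (D3 : Madd (Mmul a (Mmul a h)) h = M0).
  { rewrite <- Mmul_assoc, Haa, Mmul_negl, Mmul_1l; apply Madd_Nl. }
  assert (D4 : Madd (Mmul h h) Mid = M0) by (rewrite Hhh; apply Madd_Nl).
  assert (D5 : Madd (Mmul h a) (Mmul a h) = M0) by (rewrite Hha; apply Madd_Nl).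
  assert (D6 : Madd (Mmul h (Mmul a h)) (Mneg a) = M0).
  { rewrite <- Mmul_assoc, Hha, Mmul_negl, Mmul_assoc, Hhh, Mmul_negr, Mmul_1r, Mneg_neg.
    apply Madd_Nr. }
  assert (QN : is_quat (intertwiner a h (Mmul a h) X))
    by (apply is_quat_intertwiner; assumption).
  exists (Mscale (/ sqrt (qnorm (intertwiner a h (Mmul a h) X))) (intertwiner a h (Mmul a h) X)).
  split; [apply SU2_normalize; assumption |].
  split; apply conjM_normalize; try assumption; symmetry.
  - rewrite intertwiner_iSigmaZ_defect, D1, D2, D3, !Mmul_0l, !Madd_0r; reflexivity.
  - rewrite intertwiner_iSigmaX_defect, D4, D5, D6, !Mmul_0l, !Madd_0r; reflexivity.
Qed.

Lemma Rep_normal_form p : Rep p ->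
  exists g z1 z2, SU2 g /\ Cnorm2 z1 + Cnorm2 z2 = 1 /\ p = conjT g (tupleOf z1 z2).
Proof.
  intros Hp; pose proof (Rep_anticommute p Hp) as Hha.
  destruct p as [A B a b h w]; cbn in Hha.
  destruct Hp as (HA&_&Ha&_&Hh&_&Hta&Hth&Hw&_&Hab&HB); cbn in *.
  destruct (conj_standard_frame a h Ha Hh (SU2_traceless_sq a Ha Hta)
              (SU2_traceless_sq h Hh Hth) Hha) as [g [Hg [Hga Hgh]]].
  assert (HA' : SU2 (conjM (Madj g) A)).
  { unfold conjM; rewrite Madj_adj.
    apply SU2_mul; [apply SU2_mul; [apply SU2_adj |] |]; assumption. }
  destruct (SU2_quat _ HA') as [[z1 [z2 EA']] Hn].
  exists g, z1, z2; split; [exact Hg |]; split.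
  { rewrite EA' in Hn; exact Hn. }
  unfold conjT, tupleOf; cbn; f_equal.
  - change (mkM2 z1 (Copp (Cconj z2)) z2 (Cconj z1)) with (quat z1 z2).
    rewrite <- EA'; symmetry; apply conjM_Kr, Hg.
  - rewrite HB; symmetry; apply conjM_1, Hg.
  - symmetry; exact Hga.
  - rewrite <- conjM_adj, Hga; apply SU2_inv_unique; assumption.
  - symmetry; exact Hgh.
  - rewrite Hw, conjM_neg, conjM_1 by exact Hg; reflexivity.
Qed.

(** * Invariant coordinates *)

(* [Re tr (A E^* ) / 2]: on quaternion matrices this is the Euclidean inner product of R^4. *)
Definition frame_coord (E A : M2) : R := fst (Mtr (Mmul A (Madj E))) / 2.

Definition coordsA (p : T6) : (C * C)%type :=
  ((frame_coord Mid (tA p), frame_coord (ta p) (tA p)),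
   (frame_coord (Mmul (ta p) (th p)) (tA p), frame_coord (th p) (tA p))).

Lemma coordsA_tupleOf z1 z2 : coordsA (tupleOf z1 z2) = (z1, z2).
Proof.
  destruct z1 as [x1 y1], z2 as [x2 y2].
  unfold coordsA, frame_coord, tupleOf; cbn [tA ta th]; unfold_entries.
  f_equal; f_equal; field.
Qed.

Lemma frame_coord_conjM g E A : SU2 g -> frame_coord (conjM g E) (conjM g A) = frame_coord E A.
Proof.
  intros Hg; unfold frame_coord; rewrite conjM_adj, conjM_mul, conjM_tr by exact Hg.
  reflexivity.
Qed.

Lemma coordsA_conjT g p : SU2 g -> coordsA (conjT g p) = coordsA p.
Proof.
  intros Hg; unfold coordsA; cbn [conjT tA ta th].
  rewrite conjM_mul, !frame_coord_conjM by exact Hg.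
  rewrite <- (conjM_1 g Hg) at 1; rewrite frame_coord_conjM by exact Hg; reflexivity.
Qed.

Lemma coordsA_S3 p : Rep p -> Cnorm2 (fst (coordsA p)) + Cnorm2 (snd (coordsA p)) = 1.
Proof.
  intros Hp; destruct (Rep_normal_form p Hp) as [g [z1 [z2 [Hg [Hn ->]]]]].
  rewrite coordsA_conjT, coordsA_tupleOf by exact Hg; exact Hn.
Qed.

Section LipschitzBounded.
Variables (X : Type) (dom : X -> Prop) (d : X -> X -> R).
Hypothesis d_nonneg : forall x y, 0 <= d x y.

Definition lip_bounded (f : X -> R) : Prop :=
  exists K B, 0 <= K /\ 0 <= B /\
    (forall x y, dom x -> dom y -> Rabs (f x - f y) <= K * d x y) /\
    (forall x, dom x -> Rabs (f x) <= B).

Lemma lip_bounded_const c : lip_bounded (fun _ => c).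
Proof.
  exists 0, (Rabs c); repeat split; [lra | apply Rabs_pos | | intros; lra].
  intros x y _ _; rewrite Rminus_diag, Rabs_R0; lra.
Qed.

Lemma lip_bounded_add f g : lip_bounded f -> lip_bounded g -> lip_bounded (fun x => f x + g x).
Proof.
  intros (K1&B1&HK1&HB1&Lf&Bf) (K2&B2&HK2&HB2&Lg&Bg).
  exists (K1 + K2), (B1 + B2); repeat split; try lra.
  - intros x y Hx Hy.
    replace (f x + g x - (f y + g y)) with ((f x - f y) + (g x - g y)) by ring.
    pose proof (Rabs_triang (f x - f y) (g x - g y)).
    specialize (Lf x y Hx Hy); specialize (Lg x y Hx Hy); lra.
  - intros x Hx; pose proof (Rabs_triang (f x) (g x)).
    specialize (Bf x Hx); specialize (Bg x Hx); lra.
Qed.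

Lemma lip_bounded_opp f : lip_bounded f -> lip_bounded (fun x => - f x).
Proof.
  intros (K&B&HK&HB&Lf&Bf); exists K, B; repeat split; try assumption.
  - intros x y Hx Hy; replace (- f x - - f y) with (- (f x - f y)) by ring.
    rewrite Rabs_Ropp; auto.
  - intros x Hx; rewrite Rabs_Ropp; auto.
Qed.

Lemma lip_bounded_sub f g : lip_bounded f -> lip_bounded g -> lip_bounded (fun x => f x - g x).
Proof.
  intros Hf Hg; apply (lip_bounded_add f (fun x => - g x)); [| apply lip_bounded_opp];
    assumption.
Qed.

Lemma lip_bounded_mul f g : lip_bounded f -> lip_bounded g -> lip_bounded (fun x => f x * g x).
Proof.
  intros (K1&B1&HK1&HB1&Lf&Bf) (K2&B2&HK2&HB2&Lg&Bg).
  exists (B1 * K2 + B2 * K1), (B1 * B2); repeat split.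
  - apply Rplus_le_le_0_compat; apply Rmult_le_pos; assumption.
  - apply Rmult_le_pos; assumption.
  - intros x y Hx Hy.
    replace (f x * g x - f y * g y) with (f x * (g x - g y) + g y * (f x - f y)) by ring.
    eapply Rle_trans; [apply Rabs_triang |]; rewrite !Rabs_mult.
    pose proof (d_nonneg x y).
    assert (Tf : Rabs (f x) * Rabs (g x - g y) <= B1 * (K2 * d x y))
      by (apply Rmult_le_compat; try apply Rabs_pos; auto).
    assert (Tg : Rabs (g y) * Rabs (f x - f y) <= B2 * (K1 * d x y))
      by (apply Rmult_le_compat; try apply Rabs_pos; auto).
    lra.
  - intros x Hx; rewrite Rabs_mult; apply Rmult_le_compat; try apply Rabs_pos; auto.
Qed.

End LipschitzBounded.

Lemma Cdist_nonneg z w : 0 <= Cdist z w.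
Proof.
  unfold Cdist; pose proof (Rabs_pos (fst z - fst w)); pose proof (Rabs_pos (snd z - snd w)).
  lra.
Qed.

Lemma Mdist_nonneg X Y : 0 <= Mdist X Y.
Proof.
  unfold Mdist; pose proof (Cdist_nonneg (m11 X) (m11 Y));
  pose proof (Cdist_nonneg (m12 X) (m12 Y)); pose proof (Cdist_nonneg (m21 X) (m21 Y));
  pose proof (Cdist_nonneg (m22 X) (m22 Y)); lra.
Qed.

Lemma Mdist_le_T6dist p q :
  Mdist (tA p) (tA q) <= T6dist p q /\ Mdist (tB p) (tB q) <= T6dist p q /\
  Mdist (ta p) (ta q) <= T6dist p q /\ Mdist (tb p) (tb q) <= T6dist p q /\
  Mdist (th p) (th q) <= T6dist p q /\ Mdist (tw p) (tw q) <= T6dist p q.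
Proof.
  unfold T6dist; pose proof (Mdist_nonneg (tA p) (tA q));
  pose proof (Mdist_nonneg (tB p) (tB q)); pose proof (Mdist_nonneg (ta p) (ta q));
  pose proof (Mdist_nonneg (tb p) (tb q)); pose proof (Mdist_nonneg (th p) (th q));
  pose proof (Mdist_nonneg (tw p) (tw q)); repeat split; lra.
Qed.

Lemma T6dist_nonneg p q : 0 <= T6dist p q.
Proof.
  destruct (Mdist_le_T6dist p q) as [HA _]; pose proof (Mdist_nonneg (tA p) (tA q)); lra.
Qed.

Lemma lip_bounded_Rep_coord (sel : T6 -> M2) (ent : M2 -> C) (pr : C -> R) :
  (forall p, Rep p -> SU2 (sel p)) ->
  (forall p q, Mdist (sel p) (sel q) <= T6dist p q) ->
  (forall X Y, Rabs (pr (ent X) - pr (ent Y)) <= Mdist X Y) ->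
  (forall X, SU2 X -> Rabs (pr (ent X)) <= 1) ->
  lip_bounded T6 Rep T6dist (fun p => pr (ent (sel p))).
Proof.
  intros Hsel Hdist Hent Hbound; exists 1, 1; repeat split; try lra.
  - intros p q _ _; rewrite Rmult_1_l; eapply Rle_trans; [apply Hent | apply Hdist].
  - intros p Hp; apply Hbound, Hsel, Hp.
Qed.

Ltac lip_bounded_tac :=
  repeat first
    [ apply lip_bounded_add | apply lip_bounded_sub | apply lip_bounded_opp
    | apply lip_bounded_mul; [apply T6dist_nonneg | |] | apply lip_bounded_const
    | apply lip_bounded_Rep_coord;
      [ intros ?p ?Hp; unfold Rep in Hp; tauto
      | intros ?p ?q; pose proof (Mdist_le_T6dist p q); tauto
      | intros ?X ?Y; unfold Mdist, Cdist;
        repeat match goal with |- context [Rabs ?x] =>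
          lazymatch goal with _ : 0 <= Rabs x |- _ => fail | _ => pose proof (Rabs_pos x) end end;
        lra
      | intros ?X ?HX; pose proof (SU2_entry_bound X HX); tauto ] ].

Lemma coordsA_lip_bounded :
  lip_bounded T6 Rep T6dist (fun p => fst (fst (coordsA p))) /\
  lip_bounded T6 Rep T6dist (fun p => snd (fst (coordsA p))) /\
  lip_bounded T6 Rep T6dist (fun p => fst (snd (coordsA p))) /\
  lip_bounded T6 Rep T6dist (fun p => snd (snd (coordsA p))).
Proof.
  unfold coordsA, frame_coord, Rdiv.
  cbn [Mtr Mmul Madj Mid Cadd Cmul Copp Cconj C0 C1 m11 m12 m21 m22 fst snd].
  repeat split; lip_bounded_tac.
Qed.

Lemma coordsA_lipschitz : exists K, 0 <= K /\ forall p q, Rep p -> Rep q ->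
  Cdist (fst (coordsA p)) (fst (coordsA q)) + Cdist (snd (coordsA p)) (snd (coordsA q))
  <= K * T6dist p q.
Proof.
  destruct coordsA_lip_bounded as [(K1&_&HK1&_&L1&_) [(K2&_&HK2&_&L2&_)
    [(K3&_&HK3&_&L3&_) (K4&_&HK4&_&L4&_)]]].
  exists (K1 + K2 + K3 + K4); split; [lra |].
  intros p q Hp Hq; unfold Cdist.
  specialize (L1 p q Hp Hq); specialize (L2 p q Hp Hq);
  specialize (L3 p q Hp Hq); specialize (L4 p q Hp Hq); lra.
Qed.

(** * The homeomorphism *)

Lemma Rep_tupleOf z1 z2 : Cnorm2 z1 + Cnorm2 z2 = 1 -> Rep (tupleOf z1 z2).
Proof.
  intros Hn; unfold Rep, tupleOf; cbn [tA tB ta tb th tw].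
  split; [apply (quat_SU2 (quat z1 z2)); [exists z1, z2 |]; easy |].
  split; [apply SU2_id |]; split; [apply SU2_iSigmaZ |].
  split; [apply SU2_adj, SU2_iSigmaZ |]; split; [apply SU2_iSigmaX |].
  split; [apply SU2_neg_id |].
  repeat split; try (unfold_entries; f_equal; ring); mat_ring.
Qed.

Lemma Cdist_conj z w : Cdist (Cconj z) (Cconj w) = Cdist z w.
Proof.
  unfold Cdist; cbn [Cconj fst snd].
  replace (- snd z - - snd w) with (- (snd z - snd w)) by ring; rewrite Rabs_Ropp; reflexivity.
Qed.

Lemma Cdist_opp z w : Cdist (Copp z) (Copp w) = Cdist z w.
Proof.
  unfold Cdist; cbn [Copp fst snd].
  replace (- fst z - - fst w) with (- (fst z - fst w)) by ring.
  replace (- snd z - - snd w) with (- (snd z - snd w)) by ring.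
  rewrite !Rabs_Ropp; reflexivity.
Qed.

Lemma Mdist_refl X : Mdist X X = 0.
Proof. unfold Mdist, Cdist; rewrite !Rminus_diag, !Rabs_R0; ring. Qed.

Lemma T6dist_tupleOf z1 z2 w1 w2 :
  T6dist (tupleOf z1 z2) (tupleOf w1 w2) = 2 * (Cdist z1 w1 + Cdist z2 w2).
Proof.
  unfold T6dist, tupleOf; cbn [tA tB ta tb th tw]; rewrite !Mdist_refl.
  unfold Mdist; cbn [m11 m12 m21 m22]; rewrite Cdist_opp, !Cdist_conj; ring.
Qed.

Lemma RChar_ext (c d : RChar) : proj1_sig c = proj1_sig d -> c = d.
Proof. destruct c, d; cbn; intros ->; f_equal; apply proof_irrelevance. Qed.

Lemma S3_ext (z w : S3) : proj1_sig z = proj1_sig w -> z = w.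
Proof. destruct z, w; cbn; intros ->; f_equal; apply proof_irrelevance. Qed.

Definition class_of (p : T6) (Hp : Rep p) : RChar :=
  exist _ (cls p) (ex_intro _ p (conj Hp eq_refl)).

Lemma RChar_eq_class_of c q (Hq : Rep q) : proj1_sig c q -> c = class_of q Hq.
Proof.
  intros Hcq; apply RChar_ext.
  destruct c as [P [r [Hr ->]]]; cbn in *; apply cls_eq; exact Hcq.
Qed.

Definition rep_of (c : RChar) : T6 :=
  proj1_sig (constructive_indefinite_description _ (proj2_sig c)).

Lemma rep_of_spec c : Rep (rep_of c) /\ proj1_sig c = cls (rep_of c).
Proof. exact (proj2_sig (constructive_indefinite_description _ (proj2_sig c))). Qed.

Definition S3_of_RChar (c : RChar) : S3 :=
  exist _ (coordsA (rep_of c)) (coordsA_S3 _ (proj1 (rep_of_spec c))).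

Definition RChar_of_S3 (z : S3) : RChar :=
  class_of (tupleOf (fst (proj1_sig z)) (snd (proj1_sig z))) (Rep_tupleOf _ _ (proj2_sig z)).

Lemma S3_of_RChar_member c q : proj1_sig c q -> proj1_sig (S3_of_RChar c) = coordsA q.
Proof.
  intros Hcq; cbn; destruct (rep_of_spec c) as [_ Ec].
  rewrite Ec in Hcq; destruct Hcq as [g [Hg ->]].
  symmetry; apply coordsA_conjT, Hg.
Qed.

Lemma S3_of_RChar_K z : S3_of_RChar (RChar_of_S3 z) = z.
Proof.
  destruct z as [[z1 z2] Hz]; apply S3_ext.
  rewrite (S3_of_RChar_member (RChar_of_S3 (exist _ (z1, z2) Hz)) (tupleOf z1 z2)
             (conjEquiv_refl _)).
  apply coordsA_tupleOf.
Qed.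

Lemma RChar_of_S3_K c : RChar_of_S3 (S3_of_RChar c) = c.
Proof.
  destruct (rep_of_spec c) as [Hr Ec].
  destruct (Rep_normal_form _ Hr) as [g [z1 [z2 [Hg [_ Er]]]]].
  symmetry; apply RChar_eq_class_of.
  rewrite Ec; unfold S3_of_RChar; cbn [proj1_sig fst snd].
  rewrite Er, coordsA_conjT, coordsA_tupleOf by exact Hg; cbn [fst snd].
  apply conjEquiv_sym; exists g; split; [exact Hg | reflexivity].
Qed.

Lemma RChar_of_S3_continuous S : openRChar S -> openS3 (fun z => S (RChar_of_S3 z)).
Proof.
  intros HS [[z1 z2] Hz] HSz; cbn [proj1_sig fst snd] in *.
  destruct (HS (tupleOf z1 z2) (Rep_tupleOf _ _ Hz)) as [eps [Heps Hball]].
  { split; [apply Rep_tupleOf, Hz |]; exists (RChar_of_S3 (exist _ (z1, z2) Hz)).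
    split; [exact HSz | apply conjEquiv_refl]. }
  exists (eps / 2); split; [lra |].
  intros [[w1 w2] Hw] Hdist; unfold S3dist in Hdist; cbn [proj1_sig fst snd] in Hdist.
  destruct (Hball (tupleOf w1 w2) (Rep_tupleOf _ _ Hw)) as [_ [c [HSc Hcw]]].
  { rewrite T6dist_tupleOf; lra. }
  rewrite (RChar_eq_class_of c _ (Rep_tupleOf _ _ Hw) Hcw) in HSc.
  exact HSc.
Qed.

Lemma S3_of_RChar_continuous U : openS3 U -> openRChar (fun c => U (S3_of_RChar c)).
Proof.
  intros HU p Hp [_ [c [HUc Hcp]]].
  destruct (HU _ HUc) as [eps [Heps Hball]].
  destruct coordsA_lipschitz as [K [HK Hlip]].
  exists (eps / (K + 1)); split; [apply Rdiv_lt_0_compat; lra |].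
  intros q Hq Hpq; split; [exact Hq |].
  exists (class_of q Hq); split; [| apply conjEquiv_refl].
  apply Hball; unfold S3dist.
  rewrite (S3_of_RChar_member c p Hcp),
    (S3_of_RChar_member (class_of q Hq) q (conjEquiv_refl q)).
  eapply Rle_lt_trans; [apply Hlip; assumption |].
  pose proof (T6dist_nonneg p q).
  apply (Rmult_lt_compat_l (K + 1)) in Hpq; [| lra].
  replace ((K + 1) * (eps / (K + 1))) with eps in Hpq by (field; lra).
  nra.
Qed.

Lemma Rep_not_commute p : Rep p -> Mmul (ta p) (th p) <> Mmul (th p) (ta p).
Proof.
  intros Hp E; rewrite Rep_anticommute in E by exact Hp.
  destruct Hp as (_&_&Ha&_&Hh&_).
  exact (SU2_neq_neg _ (SU2_mul _ _ Ha Hh) E).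
Qed.

Lemma class_member_not_abelian (c : RChar) (p : T6) : proj1_sig c p -> ~ abelianT p.
Proof.
  destruct c as [P [r [Hr ->]]]; cbn; intros [g [Hg ->]] Hab.
  apply (Rep_not_commute r Hr), (conjM_inj g Hg).
  rewrite <- !conjM_mul by exact Hg.
  apply Hab; cbn; tauto.
Qed.

Theorem mainTheorem6 :
  (exists phi : S3 -> RChar,
      (forall z : S3,
          proj1_sig (phi z) = cls (tupleOf (fst (proj1_sig z)) (snd (proj1_sig z))))
      /\ homeomorphism phi)
  /\ (forall (c : RChar) (p : T6), proj1_sig c p -> ~ abelianT p).
Proof.
  split.
  - exists RChar_of_S3; split; [reflexivity |].
    exists S3_of_RChar; repeat split.
    + apply S3_of_RChar_K.
    + apply RChar_of_S3_K.
    + apply RChar_of_S3_continuous.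
    + apply S3_of_RChar_continuous.
  - apply class_member_not_abelian.
Qed.
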